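(* In the setting described in the context, let $J=(a_1,\ldots,a_j)$ and $\overline{J}=(\overline{a}_1,\ldots,\overline{a}_j)$, $1\leqslant j\leqslant n-1$, be disjoint non-empty ordered subsets of $\{1,\ldots,|L|\}$ of the same size such that $\ell_{\{a_i\}}\cap\ell_{\{\overline{a}_i\}}\cap m$ is a point for all $i$. Suppose $J'$ and $\overline{J}'$ are disjoint ordered $j$-subsets of $\{1,\ldots,|L|\}$ where, for each $i=1,\ldots,j$, the $i$-th element of $J'$ and the $i$-th element of $\overline{J}'$ is each either the $i$-th element of $J$ or the $i$-th element of $\overline{J}$. Then $z_{J,\overline{J},m}=z_{J',\overline{J}',m}$.
   Context: Let ${\mathbb K}$ be a field, $n\geqslant 2$, and consider $\mathrm{PG}_n({\mathbb K})$. For two non-intersecting subspaces $x,y$, $x\oplus y$ denotes their span. Fix points $x_0,\ldots,x_n$ in general position and put $\Sigma_i=x_0\oplus\cdots\oplus x_i$, $\pi_i=x_1\oplus\cdots\oplus x_i$. For $i=3,\ldots,n$ let $y_i$ be a point on the line $x_{i-1}\oplus x_i$ different from $x_{i-1}$ and $x_i$. Let $L$ be a finite set of lines of the plane $\Sigma_2$ meeting the line $\pi_2$ in pairwise distinct points, all different from $x_2$, labelled $\ell_{\{1\}},\ldots,\ell_{\{|L|\}}$. An ordered subset of $\{1,\ldots,|L|\}$ is a sequence of distinct elements; for $|J|\geqslant2$ write $J=(\ldots,b,a)$ ($a$ last, $b$ second-to-last) and let $J\setminus\{a\}$, $J\setminus\{b\}$ be obtained by deleting $a$, resp. $b$, keeping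 the order. Let $m$ be a line of $\Sigma_2$ through $x_2$, different from $\pi_2$. If $\ell_{\{i\}}$ and $\ell_{\{j\}}$ meet on $m$, put $z_{\{i\},\{j\},m}=\ell_{\{i\}}\cap\ell_{\{j\}}\cap m$. For disjoint ordered subsets $J=(a_1,\ldots,a_j)$, $\overline{J}=(\overline{a}_1,\ldots,\overline{a}_j)$ with $\ell_{\{a_i\}}\cap\ell_{\{\overline{a}_i\}}\cap m$ a point for all $i$, and $j\geqslant 2$, define recursively $z_{J,\overline{J},m}=(x_{|J|+1}\oplus z_{J\setminus\{a\},\overline{J}\setminus\{\overline{a}\},m})\cap(y_{|J|+1}\oplus z_{J\setminus\{b\},\overline{J}\setminus\{\overline{b}\},m})$, where $J=(\ldots,b,a)$ and $\overline{J}=(\ldots,\overline{b},\overline{a})$. *)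

(* projective space PG_n(K) modelled by row spaces of
   matrices over K^(n+1) (mxalgebra). A subspace of PG_n(K) is the row space
   of a matrix; span = (_ + _)%MS, intersection = (_ :&: _)%MS. *)
From HB Require Import structures.
From mathcomp Require Import all_boot all_order all_algebra.
Set Implicit Arguments. Unset Strict Implicit. Unset Printing Implicit Defensive.
Import GRing.Theory.
Local Open Scope ring_scope.

Section Z.
Variables (K : fieldType) (n : nat).
Variables (x y : nat -> 'rV[K]_n.+1) (ell : nat -> 'M[K]_n.+1) (m : 'M[K]_n.+1).

Definition drop_last (s : seq nat) : seq nat := take (size s).-1 s.
Definition drop_second_last (s : seq nat) : seq nat :=
  take (size s - 2) s ++ drop (size s).-1 s.

(* zf k J Jb is z_{J,Jb,m} when k = |J| = |Jb| *)
Fixpoint zf (k : nat) (J Jb : seq nat) : 'M[K]_n.+1 :=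
  match k with
  | 0 => 0
  | k1.+1 =>
    match k1 with
    | 0 => (ell (head 0%N J) :&: ell (head 0%N Jb) :&: m)%MS
    | k'.+1 =>
      ((x k'.+3 + zf k1 (drop_last J) (drop_last Jb)) :&:
       (y k'.+3 + zf k1 (drop_second_last J) (drop_second_last Jb)))%MS
    end
  end.

Definition zJ (J Jb : seq nat) : 'M[K]_n.+1 := zf (size J) J Jb.
End Z.

(** [z_{J,Jb,m}] only depends on the unordered pairs
    [{a_i, abar_i}].  For [|J| = 1] this is the symmetry of the intersection
    [ell a :&: ell abar]; in the recursive step both deletions act on [J] and
    [Jb] at the same position, so they preserve the pairing and induction on
    [|J|] applies. *)
From HB Require Import structures.
From mathcomp Require Import all_boot all_order all_algebra zify.
Set Implicit Arguments.
Unset Strict Implicit.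
Unset Printing Implicit Defensive.

Import GRing.Theory.
Local Open Scope ring_scope.

Lemma size_drop_last (s : seq nat) : size (drop_last s) = (size s).-1.
Proof. by rewrite /drop_last size_take; case: (size s) => //= k; rewrite ltnSn. Qed.

Lemma nth_drop_last (s : seq nat) i :
  (i < (size s).-1)%N -> nth 0%N (drop_last s) i = nth 0%N s i.
Proof. by move=> lt_i; rewrite /drop_last nth_take. Qed.

Lemma size_drop_second_last (s : seq nat) :
  (2 <= size s)%N -> size (drop_second_last s) = (size s).-1.
Proof.
move=> ge2; rewrite /drop_second_last size_cat size_take size_drop.
have -> : (size s - 2 < size s)%N by rewrite ltn_subrL; lia.
lia.
Qed.

Lemma nth_drop_second_last (s : seq nat) i :
  (2 <= size s)%N -> (i < (size s).-1)%N ->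
  nth 0%N (drop_second_last s) i =
  nth 0%N s (if (i < size s - 2)%N then i else (size s).-1).
Proof.
move=> ge2 lt_i; rewrite /drop_second_last nth_cat size_take.
have -> : (size s - 2 < size s)%N by rewrite ltn_subrL; lia.
case: ifP => lt_i2; first by rewrite nth_take.
by rewrite nth_drop; congr nth; lia.
Qed.

Definition pairwise_swapped (k : nat) (J Jb J' Jb' : seq nat) : Prop :=
  forall i, (i < k)%N ->
    (nth 0%N J' i = nth 0%N J i /\ nth 0%N Jb' i = nth 0%N Jb i) \/
    (nth 0%N J' i = nth 0%N Jb i /\ nth 0%N Jb' i = nth 0%N J i).

Section PairwiseSwapped.
Variables (k : nat) (J Jb J' Jb' : seq nat).
Hypotheses (sizeJ : size J = k) (sizeJb : size Jb = k)
           (sizeJ' : size J' = k) (sizeJb' : size Jb' = k).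

Lemma pairwise_swapped_drop_last :
  pairwise_swapped k J Jb J' Jb' ->
  pairwise_swapped k.-1 (drop_last J) (drop_last Jb) (drop_last J') (drop_last Jb').
Proof.
move=> sw i lt_i.
by rewrite !nth_drop_last ?sizeJ ?sizeJb ?sizeJ' ?sizeJb' //; apply: sw; lia.
Qed.

Lemma pairwise_swapped_drop_second_last : (2 <= k)%N ->
  pairwise_swapped k J Jb J' Jb' ->
  pairwise_swapped k.-1 (drop_second_last J) (drop_second_last Jb)
                        (drop_second_last J') (drop_second_last Jb').
Proof.
move=> ge2 sw i lt_i.
rewrite !nth_drop_second_last ?sizeJ ?sizeJb ?sizeJ' ?sizeJb' //.
by apply: sw; case: ifP; lia.
Qed.

End PairwiseSwapped.

Lemma zf_pairwise_swapped (K : fieldType) n (x y : nat -> 'rV[K]_n.+1)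
    (ell : nat -> 'M[K]_n.+1) (m : 'M[K]_n.+1) k (J Jb J' Jb' : seq nat) :
  size J = k -> size Jb = k -> size J' = k -> size Jb' = k ->
  pairwise_swapped k J Jb J' Jb' ->
  (zf x y ell m k J Jb :=: zf x y ell m k J' Jb')%MS.
Proof.
elim: k J Jb J' Jb' => [|k IH] J Jb J' Jb' sJ sJb sJ' sJb' sw /=.
  exact: eqmx_refl.
case: k IH sJ sJb sJ' sJb' sw => [|k] IH sJ sJb sJ' sJb' sw.
  rewrite -!(nth0 0%N); have [[-> ->]|[-> ->]] := sw 0%N isT.
    exact: eqmx_refl.
  by apply: cap_eqmx => //; apply/eqmxP; rewrite capmxC; apply/eqmxP.
apply: cap_eqmx; apply: adds_eqmx => //; apply: IH;
  rewrite ?size_drop_last ?size_drop_second_last ?sJ ?sJb ?sJ' ?sJb' //.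
- exact: (pairwise_swapped_drop_last sJ sJb sJ' sJb' sw).
- exact: (pairwise_swapped_drop_second_last sJ sJb sJ' sJb' isT sw).
Qed.

Lemma distinct_mem_pair (T : eqType) (a b c d : T) :
  a \in [:: c; d] -> b \in [:: c; d] -> a != b ->
  (a = c /\ b = d) \/ (a = d /\ b = c).
Proof.
by rewrite !inE => /orP[]/eqP-> /orP[]/eqP->; rewrite ?eqxx //; [left|right].
Qed.

Theorem lemma2p5 (K : fieldType) (n : nat) (hn : (2 <= n)%N)
  (x y : nat -> 'rV[K]_n.+1)
  (* x_0, ..., x_n in general position (a basis of K^(n+1)) *)
  (hx : row_free (\matrix_(i < n.+1) x i))
  (* y_i (3 <= i <= n) a point of x_{i-1} + x_i different from both *)
  (hy : forall i, (3 <= i <= n)%N ->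
     [/\ y i != 0, (y i <= x i.-1 + x i)%MS,
         ~~ (y i <= x i.-1)%MS & ~~ (y i <= x i)%MS])
  (N : nat) (ell : nat -> 'M[K]_n.+1)
  (* the lines l_1, ..., l_N of Sigma_2 *)
  (hell : forall k, (1 <= k <= N)%N ->
     [/\ \rank (ell k) = 2%N, (ell k <= x 0%N + x 1%N + x 2%N)%MS,
         \rank (ell k :&: (x 1%N + x 2%N))%MS = 1%N
         & ~~ (x 2%N <= ell k)%MS])
  (* meeting pi_2 in pairwise distinct points *)
  (hdist : forall k k', (1 <= k <= N)%N -> (1 <= k' <= N)%N -> k != k' ->
     ~~ (ell k :&: (x 1%N + x 2%N) == ell k' :&: (x 1%N + x 2%N))%MS)
  (m : 'M[K]_n.+1)
  (* m a line of Sigma_2 through x_2, different from pi_2 *)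
  (hm : [/\ \rank m = 2%N, (m <= x 0%N + x 1%N + x 2%N)%MS,
          (x 2%N <= m)%MS & ~~ (m == x 1%N + x 2%N)%MS])
  (J Jb : seq nat) (j : nat)
  (hj : (1 <= j <= n - 1)%N)
  (hJ : size J = j) (hJb : size Jb = j)
  (hJu : uniq J) (hJbu : uniq Jb)
  (hJr : all (fun k => 1 <= k <= N)%N J) (hJbr : all (fun k => 1 <= k <= N)%N Jb)
  (hdisj : ~~ has (fun k => k \in Jb) J)
  (hpt : forall i, (i < j)%N ->
     \rank (ell (nth 0%N J i) :&: ell (nth 0%N Jb i) :&: m)%MS = 1%N)
  (J' Jb' : seq nat)
  (hJ' : size J' = j) (hJb' : size Jb' = j)
  (hJ'u : uniq J') (hJb'u : uniq Jb')
  (hdisj' : ~~ has (fun k => k \in Jb') J')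
  (hsel : forall i, (i < j)%N ->
     nth 0%N J' i \in [:: nth 0%N J i; nth 0%N Jb i] /\
     nth 0%N Jb' i \in [:: nth 0%N J i; nth 0%N Jb i]) :
  (zJ x y ell m J Jb == zJ x y ell m J' Jb')%MS.
Proof.
apply/eqmxP; rewrite /zJ hJ hJ'; apply: zf_pairwise_swapped => // i lt_ij.
have [inJ' inJb'] := hsel i lt_ij.
apply: distinct_mem_pair inJ' inJb' _; apply/eqP => same.
move/hasPn: hdisj' => /(_ (nth 0%N J' i)); rewrite mem_nth ?hJ' //.
by rewrite same mem_nth ?hJb' // => /(_ isT).
Qed.
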